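(* Let $I_T\subseteq\mathbb{K}[x_1,\dots,x_d]$ be a toric ideal with $I_T\neq\langle x_1-1,\dots,x_d-1\rangle$. There exists a non-trivial linear loop whose invariant ideal is exactly $I_T$.
   Context: $\mathbb{K}=\overline{\mathbb{Q}}$. For an integer matrix $A=(a_{ij})\in\mathbb{Z}^{s\times d}$, let $\pi_A:\mathbb{K}[x_1,\dots,x_d]\to\mathbb{K}[z_1^{\pm1},\dots,z_s^{\pm1}]$ be the ring homomorphism sending $x_j\mapsto z_1^{a_{1j}}\cdots z_s^{a_{sj}}$; the toric ideal $I_A$ is the kernel of $\pi_A$, and a toric ideal is an ideal of the form $I_A$ for some integer matrix $A$. A linear loop with initial vector $\bm{s}\in\mathbb{Q}^d$ and update matrix $M\in\mathbb{Q}^{d\times d}$ has orbit $\{M^n\bm{s}: n\ge0\}$; a polynomial $P\in\mathbb{K}[\bm{x}]$ is an invariant if $P(M^n\bm{s})=0$ for all $n\ge0$, and the invariant ideal is the ideal of all invariants. The loop is non-trivial if its orbit is infinite. *)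

From HB Require Import structures.
From mathcomp Require Import all_boot all_order all_algebra all_field.
From mathcomp Require Import mpoly.
Set Implicit Arguments. Unset Strict Implicit. Unset Printing Implicit Defensive.
Import Order.TTheory GRing.Theory Num.Theory.
Local Open Scope ring_scope.

(* The exponent in Z^s of the Laurent monomial pi_A(x^m) = prod_j (z^{A_{.j}})^{m_j}. *)
Definition toric_exp (s d : nat) (A : 'M[int]_(s, d)) (m : 'X_{1..d}) : {ffun 'I_s -> int} :=
  [ffun i => \sum_(j < d) A i j * (m j)%:Z].

(* P lies in I_A = ker pi_A: every coefficient of the Laurent polynomial pi_A(P)
   (at every exponent e in Z^s) vanishes. *)
Definition toric_ideal (s d : nat) (A : 'M[int]_(s, d)) (P : {mpoly algC[d]}) : Prop :=
  forall e : {ffun 'I_s -> int},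
    \sum_(m <- msupp P | toric_exp A m == e) P@_m = 0.

Definition ideal_xm1 (d : nat) (P : {mpoly algC[d]}) : Prop :=
  exists c : 'I_d -> {mpoly algC[d]}, P = \sum_(i < d) c i * ('X_i - 1).

Definition orbit_pt (d : nat) (M : 'M[rat]_d) (s : 'cV[rat]_d) (n : nat) : 'I_d -> algC :=
  fun i => ratr ((M ^+ n *m s) i ord0).

Definition invariant_ideal (d : nat) (M : 'M[rat]_d) (s : 'cV[rat]_d) (P : {mpoly algC[d]}) : Prop :=
  forall n : nat, P.@[orbit_pt M s n] = 0.

Definition nontrivial_loop (d : nat) (M : 'M[rat]_d) (s : 'cV[rat]_d) : Prop :=
  ~ exists l : seq 'cV[rat]_d, forall n : nat, M ^+ n *m s \in l.

From HB Require Import structures.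
From mathcomp Require Import all_boot all_order all_algebra all_field.
From mathcomp Require Import mpoly zify ring.
Import GRing.Theory Num.Theory.
Set Implicit Arguments. Unset Strict Implicit. Unset Printing Implicit Defensive.
Local Open Scope ring_scope.

(** Take the diagonal loop with eigenvalues [lambda_j = prod_i p_i ^ A_ij] for
    distinct primes [p_i], started at [(1, ..., 1)].  Then [P(M^n 1)] is
    [sum_m P_m * mu(A m) ^ n] where [mu(e) = prod_i p_i ^ e_i]; by unique
    factorisation [mu] is injective on [Z^s], so grouping the monomials of [P]
    by their toric exponent writes [P(M^n 1)] as a combination of geometric
    sequences with pairwise distinct ratios.  Such a combination vanishes for
    all [n] iff its coefficients vanish, i.e. iff [P] lies in [I_A].  The
    orbit is infinite as soon as [A != 0]; for [A = 0] the orbit is the single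
    point [1] and [I_A = <x_1 - 1, ..., x_d - 1>], which the hypothesis
    excludes. *)

Lemma big_partition_undup (R : nmodType) (I T : eqType) (f : I -> T)
    (r : seq I) (F : I -> R) :
  \sum_(i <- r) F i = \sum_(t <- undup (map f r)) \sum_(i <- r | f i == t) F i.
Proof.
under [RHS]eq_bigr => t _ do rewrite big_mkcond.
rewrite exchange_big /=; apply: eq_big_seq => i ir.
rewrite (bigD1_seq (f i)) ?undup_uniq ?mem_undup ?map_f //= eqxx big1 ?addr0 //.
by move=> t; rewrite eq_sym => /negbTE ->.
Qed.

Lemma geometric_seqs_free (R : idomainType) (T : eqType) (U : seq T)
    (C x : T -> R) :
  uniq U -> {in U &, injective x} ->
  (forall n, \sum_(t <- U) C t * x t ^+ n = 0) -> {in U, forall t, C t = 0}.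
Proof.
elim: U C => [//|t0 U IH] C /= /andP[t0U uU] x_inj S0.
have x_neq t : t \in U -> x t != x t0.
  move=> tU; apply: contraNneq t0U => /x_inj <-; rewrite ?inE ?tU ?eqxx ?orbT //.
(* Subtracting [x t0] times the [n]-th sum from the [n+1]-st kills [C t0]. *)
have D0 : {in U, forall t, C t * (x t - x t0) = 0}.
  apply: IH => // [u v u_U v_U|n]; first by apply: x_inj; rewrite inE ?u_U ?v_U orbT.
  transitivity (\sum_(t <- t0 :: U) C t * x t ^+ n.+1
                - x t0 * \sum_(t <- t0 :: U) C t * x t ^+ n); last first.
    by rewrite !S0 mulr0 subrr.
  rewrite mulr_sumr -sumrB big_cons exprS mulrCA subrr add0r.
  by apply: eq_bigr => t _; rewrite exprS; ring.
have CU : {in U, forall t, C t = 0}.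
  move=> t tU; move/eqP: (D0 t tU); rewrite mulf_eq0 subr_eq0 (negbTE (x_neq t tU)).
  by rewrite orbF => /eqP.
move=> t; rewrite inE => /predU1P[->|]; last exact: CU.
have := S0 0%N; rewrite big_cons expr0 mulr1 big1_seq ?addr0 //.
by move=> u /andP[_ u_U]; rewrite CU ?mul0r.
Qed.

Lemma inj_nat_notin_seq (T : eqType) (f : nat -> T) (l : seq T) :
  injective f -> ~ (forall n, f n \in l).
Proof.
move=> f_inj f_l.
have sub : {subset map f (iota 0 (size l).+1) <= l} by move=> _ /mapP[n _ ->].
have := uniq_leq_size _ sub.
by rewrite map_inj_uniq ?iota_uniq // size_map size_iota ltnn => /(_ isT).
Qed.

Lemma logn_prod (p : nat) (I : Type) (r : seq I) (F : I -> nat) :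
  (forall i, 0 < F i)%N ->
  logn p (\prod_(i <- r) F i) = (\sum_(i <- r) logn p (F i))%N.
Proof.
move=> F_gt0; elim: r => [|i r IH]; first by rewrite !big_nil logn1.
by rewrite !big_cons lognM ?IH // prodn_gt0.
Qed.

Definition prime_chain (k : nat) : nat :=
  iter k.+1 (fun p => s2val (prime_above p)) 1%N.

Lemma prime_chain_prime k : prime (prime_chain k).
Proof. by rewrite /prime_chain iterS; case: prime_above. Qed.

Lemma prime_chain_inj : injective prime_chain.
Proof.
apply/incn_inj/leq_mono; apply: homo_ltn ltn_trans _ => k.
by rewrite [prime_chain k.+1]/prime_chain iterS; case: prime_above.
Qed.

Lemma prime_chain_gt0 k : (0 < prime_chain k)%N.
Proof. exact/prime_gt0/prime_chain_prime. Qed.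

Lemma prime_chain_neq0 i : (prime_chain i)%:R != 0 :> rat.
Proof. by rewrite pnatr_eq0 -lt0n prime_chain_gt0. Qed.

Section PrimeMonomial.
Variable s : nat.
Implicit Types (e f : {ffun 'I_s -> int}).

Lemma logn_prod_prime_chain (a : 'I_s -> nat) (k : 'I_s) :
  logn (prime_chain k) (\prod_(i < s) prime_chain i ^ a i) = a k.
Proof.
rewrite logn_prod => [|i]; last by rewrite expn_gt0 prime_chain_gt0.
rewrite (bigD1 k) //= big1 ?addn0 => [|i ik].
  by rewrite lognX logn_prime ?prime_chain_prime // eqxx muln1.
rewrite lognX logn_prime ?prime_chain_prime //.
by rewrite (inj_eq prime_chain_inj) (inj_eq val_inj) eq_sym (negbTE ik) muln0.
Qed.

Definition prime_mono e : rat := \prod_(i < s) (prime_chain i)%:R ^ e i.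

Lemma prime_mono0 : prime_mono 0 = 1.
Proof. by rewrite /prime_mono big1 // => i _; rewrite ffunE expr0z. Qed.

Lemma prime_monoD : {morph prime_mono : e f / e + f >-> e * f}.
Proof.
move=> e f; rewrite /prime_mono -big_split; apply: eq_bigr => i _.
by rewrite ffunE expfzDr ?prime_chain_neq0.
Qed.

Lemma prime_monoMn e n : prime_mono (e *+ n) = prime_mono e ^+ n.
Proof. by elim: n => [|n IH]; rewrite ?prime_mono0 // mulrS prime_monoD IH exprS. Qed.

Lemma prime_mono_gt0 e : 0 < prime_mono e.
Proof.
by rewrite /prime_mono prodr_gt0 // => i _; rewrite exprz_gt0 // ltr0n prime_chain_gt0.
Qed.

Lemma prime_mono_nat (a : 'I_s -> nat) :
  prime_mono [ffun i => (a i)%:Z] = (\prod_(i < s) prime_chain i ^ a i)%:R.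
Proof. by rewrite natr_prod; apply: eq_bigr => i _; rewrite ffunE natrX. Qed.

Lemma prime_mono_nat_inj (a b : 'I_s -> nat) :
  prime_mono [ffun i => (a i)%:Z] = prime_mono [ffun i => (b i)%:Z] -> a =1 b.
Proof.
rewrite !prime_mono_nat => /eqP; rewrite eqr_nat => /eqP ab k.
by rewrite -(logn_prod_prime_chain a) ab logn_prod_prime_chain.
Qed.

Lemma prime_mono_inj : injective prime_mono.
Proof.
(* Shifting both exponent vectors by [c] makes them non-negative, where unique
   factorisation in [nat] applies. *)
move=> e f mu_ef; pose c := [ffun i => (absz (e i) + absz (f i))%:Z].
have shiftE (g : {ffun 'I_s -> int}) : (forall i, 0 <= g i + c i) ->
    g + c = [ffun i => (absz (g i + c i))%:Z].
  by move=> g_c; apply/ffunP => i; rewrite [RHS]ffunE gez0_abs ?g_c // ffunE.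
have e_c i : 0 <= e i + c i by rewrite ffunE; lia.
have f_c i : 0 <= f i + c i by rewrite ffunE; lia.
have /prime_mono_nat_inj ec_fc : prime_mono [ffun i => (absz (e i + c i))%:Z] =
                                  prime_mono [ffun i => (absz (f i + c i))%:Z].
  by rewrite -(shiftE e) // -(shiftE f) // !prime_monoD mu_ef.
apply: (addIr c); rewrite (shiftE e) // (shiftE f) //.
by apply/ffunP => i; rewrite [LHS]ffunE [RHS]ffunE ec_fc.
Qed.

End PrimeMonomial.

Section Ideal.
Variable d : nat.
Implicit Types P Q : {mpoly algC[d]}.

Lemma ideal_xm1_0 : ideal_xm1 (0 : {mpoly algC[d]}).
Proof. by exists (fun _ => 0); rewrite big1 // => i _; rewrite mul0r. Qed.

Lemma ideal_xm1D P Q : ideal_xm1 P -> ideal_xm1 Q -> ideal_xm1 (P + Q).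
Proof.
move=> [c ->] [c' ->]; exists (fun i => c i + c' i).
by rewrite -big_split; apply: eq_bigr => i _; rewrite mulrDl.
Qed.

Lemma ideal_xm1Ml P Q : ideal_xm1 Q -> ideal_xm1 (P * Q).
Proof.
move=> [c ->]; exists (fun i => P * c i).
by rewrite mulr_sumr; apply: eq_bigr => i _; rewrite mulrA.
Qed.

Lemma ideal_xm1_X i : ideal_xm1 ('X_i - 1 : {mpoly algC[d]}).
Proof.
exists (fun j => (j == i)%:R); rewrite (bigD1 i) //= eqxx mul1r big1 ?addr0 //.
by move=> j /negbTE ->; rewrite mul0r.
Qed.

Lemma ideal_xm1_monomial (m : 'X_{1..d}) : ideal_xm1 ('X_[m] - 1 : {mpoly algC[d]}).
Proof.
have mulB1 P Q : ideal_xm1 (P - 1) -> ideal_xm1 (Q - 1) -> ideal_xm1 (P * Q - 1).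
  move=> IP IQ; have -> : P * Q - 1 = P * (Q - 1) + (P - 1) by ring.
  exact/ideal_xm1D/IP/ideal_xm1Ml.
have I1 : ideal_xm1 (1 - 1 : {mpoly algC[d]}) by rewrite subrr; exact: ideal_xm1_0.
rewrite mpolyXE_id; apply: (big_ind (fun Q => ideal_xm1 (Q - 1))) => // i _.
by elim: (m i) => [|k IH]; rewrite ?expr0 // exprS; apply: mulB1 => //; exact: ideal_xm1_X.
Qed.

Lemma ideal_xm1E P : ideal_xm1 P <-> P.@[fun _ => 1] = 0.
Proof.
split=> [[c ->]|P1].
  rewrite rmorph_sum big1 // => i _.
  by rewrite rmorphM rmorphB /= mevalXU rmorph1 subrr mulr0.
have -> : P = \sum_(m <- msupp P) P@_m *: ('X_[m] - 1).
  have coef_sum0 : \sum_(m <- msupp P) P@_m = 0.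
    rewrite -[RHS]P1 mevalE; apply: eq_bigr => m _.
    by rewrite big1 ?mulr1 // => i _; rewrite expr1n.
  under eq_bigr do rewrite scalerBr.
  by rewrite sumrB -scaler_suml coef_sum0 scale0r subr0 -mpolyE.
elim/big_rec: _ => [|m Q _ IQ]; first exact: ideal_xm1_0.
by rewrite -mul_mpolyC; apply: ideal_xm1D IQ; apply/ideal_xm1Ml/ideal_xm1_monomial.
Qed.

End Ideal.

Section ToricLoop.
Variables (d s : nat) (A : 'M[int]_(s, d)).

Definition toric_col (j : 'I_d) : {ffun 'I_s -> int} := [ffun i => A i j].

Definition toric_loop : 'M[rat]_d := diag_mx (\row_j prime_mono (toric_col j)).

Local Notation one := (const_mx 1 : 'cV[rat]_d).

Lemma toric_orbitE n : toric_loop ^+ n *m one = \col_j prime_mono (toric_col j) ^+ n.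
Proof.
elim: n => [|n IH]; apply/matrixP => i j; first by rewrite mul1mx !mxE.
by rewrite exprS -mulmxA IH mul_diag_mx !mxE exprS.
Qed.

Lemma toric_expE m : toric_exp A m = \sum_(j < d) toric_col j *+ m j.
Proof.
apply/ffunP => i; rewrite ffunE sum_ffunE; apply: eq_bigr => j _.
by rewrite ffunMnE ffunE pmulrn mulrzz.
Qed.

Lemma meval_toric_orbit (P : {mpoly algC[d]}) n :
  P.@[orbit_pt toric_loop one n] =
  \sum_(m <- msupp P) P@_m * ratr (prime_mono (toric_exp A m)) ^+ n.
Proof.
rewrite mevalE; apply: eq_bigr => m _; congr (_ * _).
rewrite toric_expE (big_morph _ (@prime_monoD s) (prime_mono0 s)) rmorph_prod.
rewrite -prodrXl; apply: eq_bigr => j _.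
by rewrite /orbit_pt toric_orbitE mxE prime_monoMn !rmorphXn /= exprAC.
Qed.

Lemma toric_loop_invariant (P : {mpoly algC[d]}) :
  invariant_ideal toric_loop one P <-> toric_ideal A P.
Proof.
set r := msupp P; set U := undup (map (toric_exp A) r).
pose C e := \sum_(m <- r | toric_exp A m == e) P@_m.
have evalC n : P.@[orbit_pt toric_loop one n] =
    \sum_(e <- U) C e * ratr (prime_mono e) ^+ n.
  rewrite meval_toric_orbit (big_partition_undup (toric_exp A)).
  by apply: eq_bigr => e _; rewrite big_distrl; apply: eq_bigr => m /eqP <-.
split=> [inv e | toric n]; last by rewrite evalC big1 // => e _; rewrite [C e]toric mul0r.
have [eU|eNU] := boolP (e \in U).
  apply: (geometric_seqs_free (C := C) (x := fun e => ratr (prime_mono e))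
           (undup_uniq _) _ _ eU) => [u v _ _|n].
    by move/fmorph_inj/prime_mono_inj.
  by rewrite -evalC; exact: inv.
rewrite big1_seq // => m /andP[/eqP me mr].
by move: eNU; rewrite mem_undup -me map_f.
Qed.

Lemma toric_loop_nontrivial : A != 0 -> nontrivial_loop toric_loop one.
Proof.
case/matrix0Pn=> i [j Aij] [l orbit_l]; apply: (inj_nat_notin_seq _ orbit_l).
have lam_neq1 : prime_mono (toric_col j) != 1.
  rewrite -(prime_mono0 s) (inj_eq (@prime_mono_inj s)).
  by apply: contraNneq Aij => /ffunP/(_ i); rewrite !ffunE => ->.
move=> n n' /matrixP/(_ j ord0); rewrite !toric_orbitE !mxE.
exact: (ieexprIn (prime_mono_gt0 (toric_col j)) lam_neq1).
Qed.

End ToricLoop.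

Lemma toric_ideal0 d s (P : {mpoly algC[d]}) :
  toric_ideal (0 : 'M[int]_(s, d)) P <-> ideal_xm1 P.
Proof.
rewrite -toric_loop_invariant ideal_xm1E /invariant_ideal.
have orbit1 n : orbit_pt (toric_loop (0 : 'M[int]_(s, d))) (const_mx 1) n =1 (fun=> 1).
  move=> j; rewrite /orbit_pt toric_orbitE mxE.
  have -> : toric_col (0 : 'M[int]_(s, d)) j = 0 by apply/ffunP => i; rewrite !ffunE mxE.
  by rewrite prime_mono0 expr1n rmorph1.
by split=> [/(_ 0%N)|P1 n]; rewrite (meval_eq _ (orbit1 _)).
Qed.

Theorem theorem5p2 (d s : nat) (A : 'M[int]_(s, d)) :
  (exists P : {mpoly algC[d]}, ~ (toric_ideal A P <-> ideal_xm1 P)) ->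
  exists (s0 : 'cV[rat]_d) (M : 'M[rat]_d),
    nontrivial_loop M s0 /\
    (forall P : {mpoly algC[d]}, invariant_ideal M s0 P <-> toric_ideal A P).
Proof.
move=> [P notP]; exists (const_mx 1), (toric_loop A).
split; last exact: toric_loop_invariant.
apply: toric_loop_nontrivial; apply/eqP => A0; apply: notP.
by rewrite A0; exact: toric_ideal0.
Qed.
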